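(* Let $\mathcal{G}=(\mathcal{V},\mathcal{E})$ be an unweighted connected (finite, simple) graph, let $f:\mathcal{V}\to\mathbb{R}$ be a filtering function, and let $k\geq 1$ be an integer. Let $\mathcal{G}^{k+1}$ denote the $(k+1)$-core of $\mathcal{G}$, equipped with the restriction of $f$ to its vertex set (values not recomputed) and the same threshold set as $\mathcal{G}$. Then for every integer $j\geq k$, $$PD_j(\mathcal{G},f)=PD_j(\mathcal{G}^{k+1},f).$$
   Context: Graphs are finite, simple, undirected. For $f:\mathcal{V}\to\mathbb{R}$, let $\alpha_0<\alpha_1<\dots<\alpha_m$ be a threshold set with $\alpha_0=\min_{v\in \mathcal{V}} f(v)$ and $\alpha_m=\max_{v\in\mathcal{V}} f(v)$. For $0\le i\le m$, let $\mathcal{G}_i$ be the subgraph of $\mathcal{G}$ induced by $\mathcal{V}_i=\{v\in\mathcal{V}: f(v)\leq\alpha_i\}$, and let $\widehat{\mathcal{G}}_i$ be its clique (flag) complex: the simplicial complex whose $r$-simplices are the sets of $r+1$ pairwise adjacent vertices. The nested sequence $\widehat{\mathcal{G}}_0\subset\dots\subset\widehat{\mathcal{G}}_m$ is the sublevel filtration, and $PD_j(\mathcal{G},f)$ is the $j$-th persistence diagram of this filtration (the multiset of birth–death pairs of $j$-dimensional homology classes, homology with coefficients in a fixed field). For a subgraph $\mathcal{H}\subset\mathcal{G}$ with vertex set $\mathcal{W}\subset\mathcal{V}$, $PD_j(\mathcal{H},f)$ is defined the same way using $f|_{\mathcal{W}}$ and the same thresholds $\alpha_0,\dots,\alpha_m$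 (i.e. the $i$-th complex is the clique complex of the subgraph of $\mathcal{H}$ induced by $\{w\in\mathcal{W}: f(w)\le\alpha_i\}$). The $k$-core $\mathcal{G}^k$ of $\mathcal{G}$ is the subgraph obtained by iteratively deleting vertices (with their incident edges) of degree less than $k$; equivalently, the largest induced subgraph in which every vertex has degree at least $k$. *)

From mathcomp Require Import all_boot all_order all_algebra.
Set Implicit Arguments. Unset Strict Implicit. Unset Printing Implicit Defensive.
Import Order.TTheory GRing.Theory Num.Theory.
Local Open Scope ring_scope.

Section Defs.
Variables (T : finType) (e : rel T).

Definition clique (s : {set T}) : bool :=
  [forall u in s, forall v in s, (u != v) ==> e u v].

(* k-core: the largest vertex set W such that every vertex of W has at least
   k neighbours in W (union of all such sets, which is itself such a set). *)
Definition kcore_ok (k : nat) (W : {set T}) : bool :=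
  [forall v in W, (k <= #|[set u in W | e v u]|)%N].
Definition kcore (k : nat) : {set T} :=
  \bigcup_(W : {set T} | kcore_ok k W) W.

(* Indexing all vertex subsets by ordinals; chains are row vectors over F. *)
Definition Nsets := #|{: {set T}}|.
Definition sv (i : 'I_Nsets) : {set T} := enum_val i.

Variable F : fieldType.

(* Simplicial boundary matrix (rows = simplices, row s = boundary of s),
   w.r.t. the vertex order given by enum_rank.  Entry (s,t) is nonzero iff
   t = s minus one vertex v and t is nonempty (non-augmented complex); its sign
   is (-1)^(number of vertices of s below v). *)
Definition bd : 'M[F]_(Nsets, Nsets) :=
  \matrix_(i, j)
    let s := sv i in let t := sv j in
    if [&& t \subset s, #|s :\: t| == 1 & (0 < #|t|)%N] then
      (-1) ^+ #|[set w in t | [exists u in s :\: t, (enum_rank w < enum_rank u)%N]]|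
    else 0.

Variables (R : realFieldType) (f : T -> R) (alpha : nat -> R).

Definition inK (W : {set T}) (i : nat) (s : {set T}) : bool :=
  [&& s != set0, s \subset [set w in W | f w <= alpha i] & clique s].

Definition chains (W : {set T}) (r i : nat) :=
  \big[@addsmx F Nsets Nsets Nsets/(0 : 'M[F]_Nsets)]_(x : 'I_Nsets | (#|sv x| == r.+1) && inK W i (sv x))
      (<<@delta_mx F 1 Nsets ord0 x>>)%MS.

Definition cycles W r i := (chains W r i :&: kermx bd)%MS.
Definition bounds W r i := (chains W r.+1 i *m bd)%MS.

Definition pbetti W r a b : nat :=
  (\rank (cycles W r a) - \rank (cycles W r a :&: bounds W r b))%N.

Definition pbetti_prev W r a b : nat :=
  if a is a'.+1 then pbetti W r a' b else 0%N.

Definition mult W r i l : nat :=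
  ((pbetti W r i l.-1 + pbetti_prev W r i l)
   - (pbetti_prev W r i l.-1 + pbetti W r i l))%N.

Definition mult_inf (m : nat) W r i : nat :=
  (pbetti W r i m - pbetti_prev W r i m)%N.

(* r-th persistence diagram, as a multiset (seq up to permutation) of
   birth-death pairs; None stands for death at +infinity. *)
Definition PD (m : nat) (W : {set T}) (r : nat) : seq (R * option R) :=
  flatten [seq nseq (mult W r i l) (alpha i, Some (alpha l))
          | i <- iota 0 m.+1, l <- iota i.+1 (m - i)]
  ++ flatten [seq nseq (mult_inf m W r i) (alpha i, None) | i <- iota 0 m.+1].

End Defs.

From Pilot Require Import Defs.
From mathcomp Require Import all_boot all_order all_algebra.
Set Implicit Arguments. Unset Strict Implicit. Unset Printing Implicit Defensive.
Import Order.TTheory GRing.Theory Num.Theory.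
Local Open Scope ring_scope.

(* Write K for the (k+1)-core.  The degree-j diagram is determined by the
   spaces of j-cycles Z_j(a) and of j-boundaries B_j(b) of the filtration
   (lemma PD_eq), so it suffices to show that these spaces are the same
   for the whole graph and for the subgraph induced by K.
   - Boundaries: a j-boundary is the boundary of a chain of cliques with
     j+2 vertices; each vertex of such a clique has j+1 >= k+1 neighbours
     inside it, so the clique lies in K (clique_kcore, chains_kcore).
   - Cycles: let u be a j-cycle of cliques with j+1 vertices, j >= 1, and
     let v lie in a clique s of its support.  Removing from s a vertex
     y <> v yields a face containing v; since u is a cycle that face is
     also a face of another clique s' = face + w of the support, and w is
     a neighbour of v outside s (cycle_new_neighbour).  Hence every vertex
     of the support has j+1 neighbours inside the support, which forces the
     support into the (j+1)-core, a subset of K (cycle_support_kcore). *)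

Section KCore.
Variables (T : finType) (e : rel T).

Lemma cliqueP s u v : clique e s -> u \in s -> v \in s -> u != v -> e u v.
Proof. by move=> /forall_inP/(_ u) + us vs => /(_ us)/forall_inP/(_ v vs)/implyP. Qed.

Lemma kcore_max k (W : {set T}) : kcore_ok e k W -> W \subset kcore e k.
Proof. by move=> okW; apply: (bigcup_sup W). Qed.

Lemma kcore_deg k v :
  v \in kcore e k -> (k <= #|[set u in kcore e k | e v u]|)%N.
Proof.
case/bigcupP=> W okW vW; have sWK := kcore_max okW.
apply: leq_trans (forall_inP okW v vW) _; apply: subset_leq_card.
by apply/subsetP=> u; rewrite !inE => /andP[/(subsetP sWK) -> ->].
Qed.

Lemma kcore_mono k l : (k <= l)%N -> kcore e l \subset kcore e k.
Proof.
move=> kl; apply: kcore_max; apply/forall_inP=> v vK.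
exact: leq_trans kl (kcore_deg vK).
Qed.

Lemma kcore_extend k (W : {set T}) :
  (forall v, v \in W -> (k <= #|[set u in kcore e k :|: W | e v u]|)%N) ->
  W \subset kcore e k.
Proof.
move=> degW; apply: subset_trans (subsetUr (kcore e k) W) _.
apply: kcore_max; apply/forall_inP=> v; rewrite inE => /orP[vK | /degW //].
apply: leq_trans (kcore_deg vK) (subset_leq_card _).
by apply/subsetP=> u; rewrite !inE => /andP[-> ->].
Qed.

Lemma clique_kcore k s : clique e s -> (k < #|s|)%N -> s \subset kcore e k.
Proof.
move=> cl_s ks; apply: kcore_max; apply/forall_inP=> v vs.
have nbr : s :\ v \subset [set u in s | e v u].
  apply/subsetP=> u; rewrite !inE => /andP[uv us].
  by rewrite us (cliqueP cl_s vs us) // eq_sym.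
apply: leq_trans (subset_leq_card nbr).
by move: ks; rewrite (cardsD1 v s) vs add1n ltnS.
Qed.

End KCore.
Lemma sv_enum_rank (T : finType) (s : {set T}) : sv (enum_rank s) = s.
Proof. exact: enum_rankK. Qed.

Lemma setD_card1 (T : finType) (s t : {set T}) :
  t \subset s -> #|s :\: t| = 1%N -> exists2 w, w \notin t & s = w |: t.
Proof.
move=> ts /eqP/cards1P[w sDt]; have : w \in s :\: t by rewrite sDt set11.
rewrite inE => /andP[wt ws]; exists w => //; apply/setP=> z; rewrite in_setU1.
case: (eqVneq z w) => [-> // | zw] /=; apply/idP/idP => [zs | /(subsetP ts) //].
by apply: contraNT zw => zt; rewrite -in_set1 -sDt inE zt.
Qed.

Section Boundary.
Variables (T : finType) (F : fieldType).
Local Notation bd := (bd T F).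

(* The boundary matrix is nonzero exactly at the pairs (simplex, nonempty
   codimension-one face): the signs +-1 never vanish. *)
Lemma bd_neq0 x y :
  (bd x y != 0) = [&& sv y \subset sv x, #|sv x :\: sv y| == 1%N & (0 < #|sv y|)%N].
Proof.
by rewrite /Defs.bd mxE /=; case: ifP => _; rewrite ?eqxx // expf_neq0 // oppr_eq0 oner_eq0.
Qed.

(* In a cycle, a face of a supported simplex is the face of a second
   supported simplex, since its coefficient in the boundary must cancel. *)
Lemma cycle_cofacet (u : 'rV[F]_(Nsets T)) x y :
  u *m bd = 0 -> u 0 x != 0 -> bd x y != 0 ->
  exists2 z, z != x & (u 0 z != 0) && (bd z y != 0).
Proof.
move=> u_cycle ux bdxy; apply/exists_inP; apply: contraT => /exists_inPn none.
have := congr1 (fun M : 'rV[F]_(Nsets T) => M 0 y) u_cycle.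
rewrite !mxE (bigD1 x) //= big1 ?addr0 => [/eqP|z zx].
  by rewrite mulf_eq0 (negPf ux) (negPf bdxy).
by apply/eqP; rewrite mulf_eq0; have := none z zx; rewrite negb_and !negbK.
Qed.

End Boundary.

Section CycleSupport.
Variables (T : finType) (e : rel T) (F : fieldType) (r : nat).
Variable u : 'rV[F]_(Nsets T).
Hypothesis r_gt0 : (0 < r)%N.
Hypothesis u_cycle : u *m bd T F = 0.
Hypothesis u_cliques :
  forall x, u 0 x != 0 -> (#|sv x| == r.+1) && clique e (sv x).

Let supp : {set T} := \bigcup_(x | u 0 x != 0) sv x.

Lemma cycle_new_neighbour x v : u 0 x != 0 -> v \in sv x ->
  exists2 w, w \notin sv x & e v w && (w \in supp).
Proof.
move=> ux vx; have /andP[/eqP card_x cl_x] := u_cliques ux.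
have [y] : exists y, y \in sv x :\ v.
  by apply/card_gt0P; move: card_x; rewrite (cardsD1 v) vx add1n => -[->].
rewrite !inE => /andP[yv yx]; set rho := sv x :\ y.
have vrho : v \in rho by rewrite !inE eq_sym yv.
have bd_x : bd T F x (enum_rank rho) != 0.
  rewrite bd_neq0 sv_enum_rank subsetDl setDDr setDv set0U.
  rewrite (setIidPr _) ?sub1set // cards1 eqxx /=.
  by apply/card_gt0P; exists v.
have [z zx /andP[uz]] := cycle_cofacet u_cycle ux bd_x.
rewrite bd_neq0 sv_enum_rank => /and3P[rho_z /eqP/(setD_card1 rho_z)[w wrho z_w] _].
have /andP[_ cl_z] := u_cliques uz.
have wy : w != y.
  apply: contraNneq zx => wy; apply/eqP/enum_val_inj; rewrite -[enum_val z]/(sv z).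
  by rewrite -[enum_val x]/(sv x) z_w wy /rho setD1K.
have wx : w \notin sv x by rewrite -(setD1K yx) in_setU1 negb_or wy.
exists w => //; apply/andP; split; last by apply/bigcupP; exists z; rewrite // z_w setU11.
apply: (cliqueP cl_z); rewrite ?z_w ?setU11 ?in_setU1 ?vrho ?orbT //.
by apply: contraNneq wx => <-.
Qed.

(* The support of u lies in the (r+1)-core: a vertex v of a supported clique
   has its r clique-mates plus the new neighbour above. *)
Lemma cycle_support_kcore x : u 0 x != 0 -> sv x \subset kcore e r.+1.
Proof.
move=> ux; apply: subset_trans (bigcup_sup x ux) (kcore_extend (W := supp) _).
move=> v /bigcupP[x' ux' vx']; have /andP[/eqP card_x' cl_x'] := u_cliques ux'.
have [w wx' /andP[evw w_supp]] := cycle_new_neighbour ux' vx'.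
have nbr : w |: (sv x' :\ v) \subset [set z in kcore e r.+1 :|: supp | e v z].
  apply/subsetP=> z; rewrite !inE => /orP[/eqP -> | /andP[zv zx']].
    by rewrite evw w_supp orbT.
  rewrite (cliqueP cl_x' vx' zx') 1?eq_sym // andbT; apply/orP; right.
  by apply/bigcupP; exists x'.
apply: leq_trans (subset_leq_card nbr).
rewrite cardsU1 !inE negb_and wx' orbT /=.
by move: card_x'; rewrite (cardsD1 v) vx' add1n => -[->].
Qed.

End CycleSupport.

Lemma sub_coord_spanP (F : fieldType) N (P : pred 'I_N) (u : 'rV[F]_N) :
  reflect (forall y, u 0 y != 0 -> P y)
    (u <= \big[@addsmx F N N N/(0 : 'M[F]_N)]_(x | P x) <<@delta_mx F 1 N ord0 x>>)%MS.
Proof.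
apply: (iffP idP) => [/sub_sums_genmxP[u_ ->] y | suppP].
  rewrite summxE; apply: contraNT => nPy; rewrite big1 // => x Px.
  rewrite !mxE big_ord1 mxE.
  have -> : (y == x) = false by apply: contraNF nPy => /eqP ->.
  by rewrite andbF mulr0.
rewrite [u]row_sum_delta (bigID P) /= [X in _ + X]big1 ?addr0 => [|y nPy].
  apply: summx_sub => x Px; apply: scalemx_sub.
  by apply: (sumsmx_sup x) => //; rewrite genmxE.
suff /eqP -> : u 0 y == 0 by rewrite scale0r.
by apply: contraNT nPy; apply: suppP.
Qed.

Section Filtration.
Variables (T : finType) (e : rel T) (F : fieldType).
Variables (R : realFieldType) (f : T -> R) (alpha : nat -> R).
Local Notation inK := (inK e f alpha).
Local Notation chains := (chains e F f alpha).
Local Notation cycles := (cycles e F f alpha).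
Local Notation bounds := (bounds e F f alpha).
Local Notation pbetti := (pbetti e F f alpha).
Local Notation pbetti_prev := (pbetti_prev e F f alpha).

Lemma inK_subset (W : {set T}) i (s : {set T}) : inK W i s -> s \subset W.
Proof.
case/and3P=> _ /subset_trans + _; apply.
by apply/subsetP=> z; rewrite inE => /andP[].
Qed.

Lemma inK_setT (W : {set T}) i (s : {set T}) : s \subset W -> inK [set: T] i s = inK W i s.
Proof.
move=> /subsetP sW; congr [&& _, _ & _]; apply/subsetP/subsetP => s_low z zs.
  by move: (s_low z zs); rewrite !inE sW.
by move: (s_low z zs); rewrite !inE => /andP[].
Qed.

Lemma chainsP (W : {set T}) r i (u : 'rV[F]_(Nsets T)) :
  reflect (forall x, u 0 x != 0 -> (#|sv x| == r.+1) && inK W i (sv x))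
          (u <= chains W r i)%MS.
Proof. exact: sub_coord_spanP. Qed.

Lemma chains_sub_setT (W : {set T}) r i : (chains W r i <= chains [set: T] r i)%MS.
Proof.
apply/sumsmx_subP=> x /andP[card_x inKx]; apply: (sumsmx_sup x) => //.
by rewrite card_x (inK_setT _ (inK_subset inKx)).
Qed.

(* r-chains only involve cliques with r+1 vertices, which lie in the
   r-core; hence they are the same for any W containing it. *)
Lemma chains_kcore (W : {set T}) r i :
  kcore e r \subset W -> chains [set: T] r i = chains W r i.
Proof.
move=> kW; apply: eq_bigl => x; case: (#|sv x| =P r.+1) => //= card_x.
have [cl_x | ncl_x] := boolP (clique e (sv x)); last by rewrite /inK (negPf ncl_x) !andbF.
by rewrite (@inK_setT W) // (subset_trans _ kW) // clique_kcore // card_x.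
Qed.

Lemma cycles_kcore (W : {set T}) r i : (0 < r)%N -> kcore e r.+1 \subset W ->
  (cycles [set: T] r i == cycles W r i)%MS.
Proof.
move=> r_gt0 kW; apply/andP; split; last by rewrite capmxS ?chains_sub_setT.
rewrite sub_capmx capmxSr andbT; apply/row_subP=> n; set u := row n _.
have /chainsP u_chain : (u <= chains [set: T] r i)%MS.
  exact: submx_trans (row_sub _ _) (capmxSl _ _).
have u_cycle : u *m bd T F = 0.
  by apply/sub_kermxP; exact: submx_trans (row_sub _ _) (capmxSr _ _).
have u_cliques x : u 0 x != 0 -> (#|sv x| == r.+1) && clique e (sv x).
  by move=> ux; have /andP[-> /and3P[_ _ ->]] := u_chain x ux.
apply/chainsP => x ux; have /andP[-> inKx] := u_chain x ux.
by rewrite -inK_setT // (subset_trans _ kW) // (cycle_support_kcore r_gt0 u_cycle u_cliques).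
Qed.

Lemma PD_eq m (W W' : {set T}) r :
  (forall a, (cycles W r a == cycles W' r a)%MS) ->
  (forall b, bounds W r b = bounds W' r b) ->
  PD e F f alpha m W r = PD e F f alpha m W' r.
Proof.
move=> cyc bnd.
have pb a b : pbetti W r a b = pbetti W' r a b.
  rewrite /Defs.pbetti bnd (eqmx_rank (cyc a)).
  by rewrite (cap_eqmx (eqmxP (cyc a)) (eqmx_refl _)).
have pbp a b : pbetti_prev W r a b = pbetti_prev W' r a b by case: a => //= a; apply: pb.
rewrite /PD /mult /mult_inf; congr (flatten _ ++ flatten _).
  by apply: eq_allpairs => i l; rewrite !pb !pbp.
by apply: eq_map => i; rewrite pb pbp.
Qed.

End Filtration.

(* Main theorem: for j >= k, the degree-j diagrams of G and of its
   (k+1)-core coincide. *)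
Theorem theorem1 (T : finType) (e : rel T)
  (e_sym : symmetric e) (e_irr : irreflexive e)
  (e_conn : forall x y : T, connect e x y)
  (F : fieldType) (R : realFieldType) (f : T -> R)
  (m : nat) (alpha : nat -> R)
  (alpha_incr : forall i, (i < m)%N -> alpha i < alpha i.+1)
  (alpha_min : (forall v, alpha 0%N <= f v) /\ (exists v, f v = alpha 0%N))
  (alpha_max : (forall v, f v <= alpha m) /\ (exists v, f v = alpha m))
  (k : nat) (hk : (1 <= k)%N) :
  forall j : nat, (k <= j)%N ->
    perm_eq (PD e F f alpha m [set: T] j)
            (PD e F f alpha m (kcore e k.+1) j).
Proof.
move=> j kj.
have core_sub : kcore e j.+1 \subset kcore e k.+1 by apply: kcore_mono.
suff -> : PD e F f alpha m [set: T] j = PD e F f alpha m (kcore e k.+1) j.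
  exact: perm_refl.
apply: PD_eq => [a | b]; first exact: cycles_kcore (leq_trans hk kj) core_sub.
by rewrite /Defs.bounds; congr (_ *m _); apply: chains_kcore.
Qed.
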